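(* Let $m\ge0$, $r>0$ and $\gamma>0$. If $r\le\sqrt{2/(\gamma m)}$, then for all $0\le\tau<\pi mr/4$, all $d\ge0$ and all $\omega>0$, $$\mathrm{Re}\left((\pi+6j)\left(1+\frac{\gamma}{j\omega\big(mj\omega+d+\tfrac1r e^{-j\omega\tau}\big)}\right)\right)>0.$$
   Context: $j$ denotes the imaginary unit. *)

From Stdlib Require Export Reals.
Open Scope R_scope.

Definition C : Type := (R * R)%type.
Definition Re (z : C) : R := fst z.
Definition Im (z : C) : R := snd z.
Definition RtoC (x : R) : C := (x, 0).
Definition Cj : C := (0, 1).
Definition Cadd (z w : C) : C := (fst z + fst w, snd z + snd w).
Definition Cmul (z w : C) : C :=
  (fst z * fst w - snd z * snd w, fst z * snd w + snd z * fst w).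
Definition Cinv (z : C) : C :=
  (fst z / (fst z ^ 2 + snd z ^ 2), - snd z / (fst z ^ 2 + snd z ^ 2)).
Definition Cdiv (z w : C) : C := Cmul z (Cinv w).
Definition Cexpj (t : R) : C := (cos t, sin t).

Definition denom (m d r tau w : R) : C :=
  Cmul (Cmul Cj (RtoC w))
       (Cadd (Cadd (Cmul (RtoC m) (Cmul Cj (RtoC w))) (RtoC d))
             (Cmul (RtoC (1 / r)) (Cexpj (- (w * tau))))).

Definition expr7 (m d r gamma tau w : R) : C :=
  Cmul (PI, 6) (Cadd (RtoC 1) (Cdiv (RtoC gamma) (denom m d r tau w))).

From Stdlib Require Import Reals Lra Psatz.
Open Scope R_scope.

(* With k = m w r, t = w tau, p = k - sin t and e = r d + cos t, the
   denominator is (w/r) (-p + j e), so the real part in question equals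
   [PI (p^2 + e^2) - g (PI p - 6 e)] / (p^2 + e^2) with g = gamma r / w, and
   the hypothesis on r says exactly g k <= 2.  It therefore suffices that
   k PI (p^2 + e^2) - 2 (PI p - 6 e) > 0.  This quadratic in e increases from
   e = cos t on (for t < PI/2), where it equals
   PI (k^2 - 1) (k - 2 sin t) + 12 cos t, and the condition 4 t < PI k makes
   that positive; the delicate range 1 < k < 2 sin t is settled by Taylor
   bounds for sin and cos near PI/2. *)

Lemma PI_gt_3_le_4 : 3 < PI <= 4.
Proof. pose proof PI_4; pose proof PI2_3_2; lra. Qed.

Lemma sin_le_id x : 0 <= x -> sin x <= x.
Proof.
intros [hx | <-]; [now apply Rlt_le, sin_lt_x | rewrite sin_0; lra].
Qed.

Lemma sin_ge_cubic x : 0 <= x -> x <= PI -> x - x^3/6 <= sin x.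
Proof.
intros h0 h1; destruct (sin_bound x 0 h0 h1) as [hs _].
unfold sin_approx, sin_term in hs; simpl in hs; lra.
Qed.

Lemma cos_ge_quadratic x : - PI/2 <= x -> x <= PI/2 -> 1 - x^2/2 <= cos x.
Proof.
intros h0 h1; destruct (cos_bound x 0 h0 h1) as [hc _].
unfold cos_approx, cos_term in hc; simpl in hc; lra.
Qed.

Lemma cos_le_quartic x : - PI/2 <= x -> x <= PI/2 -> cos x <= 1 - x^2/2 + x^4/24.
Proof.
intros h0 h1; destruct (cos_bound x 0 h0 h1) as [_ hc].
unfold cos_approx, cos_term in hc; simpl in hc; lra.
Qed.

Lemma pow2_le_of_le_sqrt x y : 0 <= x -> 0 <= y -> x <= sqrt y -> x^2 <= y.
Proof.
intros hx hy hxy; rewrite <- (sqrt_sqrt y hy); pose proof (sqrt_pos y); nra.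
Qed.

Lemma cubic_margin_pos_small k t : 0 < k <= 1 -> 0 <= t -> 4*t < PI*k ->
  0 < PI*(k^2-1)*(k - 2*sin t) + 12*cos t.
Proof.
intros hk ht hkt; pose proof PI_gt_3_le_4.
assert (ht1 : t < 1) by nra.
assert (hcos : 1 - t^2/2 <= cos t) by (apply cos_ge_quadratic; lra).
assert (hsin : 0 <= sin t) by (apply sin_ge_0; lra).
assert (0 <= (1 - k^2)*sin t) by (apply Rmult_le_pos; nra).
assert ((k^2-1)*(k - 2*sin t) >= -1) by nra.
assert (PI*((k^2-1)*(k - 2*sin t)) >= -PI) by nra.
nra.
Qed.

(* Here u = PI/2 - t, so sin t = cos u and cos t = sin u. *)
Lemma cubic_margin_pos_near_right_angle k u :
  1 < k -> 0 < u <= PI/2 -> PI*(k-2) > -4*u ->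
  0 < PI*(k^2-1)*(k - 2*cos u) + 12*sin u.
Proof.
intros hk hu hku; pose proof PI_gt_3_le_4.
assert (hcos : cos u <= 1 - u^2/2 + u^4/24) by (apply cos_le_quartic; lra).
assert (hsin : u - u^3/6 <= sin u) by (apply sin_ge_cubic; lra).
destruct (Rle_lt_dec (2*cos u) k) as [hk2 | hk2].
{ assert (0 <= sin u) by (apply sin_ge_0; lra).
  assert (0 <= (k^2-1)*(k - 2*cos u)) by (apply Rmult_le_pos; nra). nra. }
assert (hcos1 : cos u <= 1) by (pose proof (COS_bound u); lra).
set (X := k^2-1).
assert (hX : 0 < X < 3) by (unfold X; nra).
set (Y := -4*u + PI*(u^2 - u^4/12)).
assert (hlow : PI*X*(k - 2*cos u) >= X*Y).
{ assert (PI*X*(k - 2*cos u) >= PI*X*(k-2+u^2-u^4/12))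
    by (apply Rmult_ge_compat_l; nra).
  assert (PI*X*(k-2+u^2-u^4/12) - X*Y = X*(PI*(k-2)+4*u)) by (unfold Y; ring).
  nra. }
destruct (Rle_lt_dec 0 Y) as [hY | hY]; [nra |].
(* For Y < 0 the worst case is X = 3, and 3 Y + 12 sin u > 0 by the Taylor bounds. *)
assert (3*Y + 12*u - 2*u^3 = u^2*(3*PI*(1-u^2/12) - 2*u)) by (unfold Y; field).
assert (0 < 3*PI*(1-u^2/12) - 2*u) by nra.
nra.
Qed.

Lemma cubic_margin_pos k t : 0 < k -> 0 <= t < PI/2 -> 4*t < PI*k ->
  0 < PI*(k^2-1)*(k - 2*sin t) + 12*cos t.
Proof.
intros hk ht hkt.
destruct (Rle_lt_dec k 1) as [hk1 | hk1].
- apply cubic_margin_pos_small; lra.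
- rewrite <- (cos_shift t), <- (sin_shift t).
  apply cubic_margin_pos_near_right_angle; lra.
Qed.

Lemma quadratic_margin_at_cos k t e :
  k*PI*((k - sin t)^2 + e^2) - 2*PI*(k - sin t) + 12*e =
  PI*(k^2-1)*(k - 2*sin t) + 12*cos t + (e - cos t)*(k*PI*(e + cos t) + 12).
Proof.
pose proof (sin2_cos2 t) as hsc; unfold Rsqr in hsc.
apply Rminus_diag_uniq.
transitivity (PI*k*(sin t * sin t + cos t * cos t - 1)); [ring | rewrite hsc; ring].
Qed.

Lemma quadratic_margin_pos_acute k t e :
  0 < k -> 0 <= t < PI/2 -> 4*t < PI*k -> cos t <= e ->
  0 < k*PI*((k - sin t)^2 + e^2) - 2*PI*(k - sin t) + 12*e.
Proof.
intros hk ht hkt he; pose proof PI_gt_3_le_4.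
assert (0 < cos t) by (apply cos_gt_0; lra).
rewrite quadratic_margin_at_cos.
pose proof (cubic_margin_pos k t hk ht hkt).
assert (0 <= k*PI*(e + cos t)) by (apply Rmult_le_pos; nra).
assert (0 <= (e - cos t)*(k*PI*(e + cos t) + 12)) by (apply Rmult_le_pos; lra).
lra.
Qed.

(* For t >= PI/2 we have k > 2, and the terms in e are bounded below by 12 cos t. *)
Lemma quadratic_margin_pos_obtuse k t e :
  PI/2 <= t -> 4*t < PI*k -> cos t <= e ->
  0 < k*PI*((k - sin t)^2 + e^2) - 2*PI*(k - sin t) + 12*e.
Proof.
intros ht hkt he; pose proof PI_gt_3_le_4.
set (v := t - PI/2).
assert (hcos : cos t = - sin v).
{ unfold v; rewrite <- sin_shift, <- sin_neg; f_equal; ring. }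
pose proof (sin_le_id v ltac:(unfold v; lra)).
assert (hkv : PI*k > 2*PI + 4*v) by (unfold v; lra).
assert (hk : k > 2) by nra.
set (p := k - sin t).
assert (hp : p >= k - 1) by (unfold p; pose proof (SIN_bound t); lra).
assert (hpk : p*(k*p - 2) >= 3*(k-2)).
{ assert (0 <= (p-(k-1))*(k*(p+(k-1))-2)) by (apply Rmult_le_pos; nra).
  assert (0 <= (k-2)*((k-2)*(k+2))) by (apply Rmult_le_pos; nra).
  nra. }
assert (0 <= k*PI*e^2) by (apply Rmult_le_pos; nra).
assert (PI*(p*(k*p - 2)) >= PI*(3*(k-2))) by (apply Rmult_ge_compat_l; lra).
nra.
Qed.

Lemma quadratic_margin_pos k t e : 0 < k -> 0 <= t -> 4*t < PI*k -> cos t <= e ->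
  0 < k*PI*((k - sin t)^2 + e^2) - 2*PI*(k - sin t) + 12*e.
Proof.
intros hk ht hkt he.
destruct (Rlt_le_dec t (PI/2)).
- apply quadratic_margin_pos_acute; lra.
- now apply quadratic_margin_pos_obtuse.
Qed.

Lemma re_numerator_pos k t g e :
  0 < k -> 0 <= t -> 4*t < PI*k -> cos t <= e -> 0 < g -> g*k <= 2 ->
  0 < PI*((k - sin t)^2 + e^2) - g*(PI*(k - sin t) - 6*e).
Proof.
intros hk ht hkt he hg hgk; pose proof PI_gt_3_le_4.
pose proof (quadratic_margin_pos k t e hk ht hkt he).
assert (0 < k - sin t) by (pose proof (sin_le_id t ht); nra).
set (p := k - sin t) in *.
destruct (Rle_lt_dec (PI*p - 6*e) 0).
- assert (0 < PI*(p^2 + e^2)) by nra. nra.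
- assert (g*k*(PI*p - 6*e) <= 2*(PI*p - 6*e)) by nra.
  assert (0 < k*(PI*(p^2 + e^2) - g*(PI*p - 6*e))) by nra.
  nra.
Qed.

Lemma denom_eq m d r tau w : r <> 0 ->
  denom m d r tau w =
  (w/r * - (m*w*r - sin (w*tau)), w/r * (r*d + cos (w*tau))).
Proof.
intros hr.
unfold denom, Cmul, Cadd, RtoC, Cj, Cexpj; simpl.
rewrite cos_neg, sin_neg; f_equal; field; exact hr.
Qed.

Lemma Re_mul_one_add_div a b c x y : x^2 + y^2 <> 0 ->
  Re (Cmul (a, b) (Cadd (RtoC 1) (Cdiv (RtoC c) (x, y)))) =
  a + c*(a*x + b*y)/(x^2 + y^2).
Proof.
intros hxy; unfold Cmul, Cadd, Cdiv, Cinv, RtoC, Re; simpl.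
field; contradict hxy; lra.
Qed.

Lemma Re_expr7_eq m d r gamma tau w : 0 < r -> 0 < w ->
  let p := m*w*r - sin (w*tau) in
  let e := r*d + cos (w*tau) in
  p^2 + e^2 <> 0 ->
  Re (expr7 m d r gamma tau w) =
  (PI*(p^2 + e^2) - gamma*r/w*(PI*p - 6*e)) / (p^2 + e^2).
Proof.
intros hr hw p e hpe.
assert (hscale : forall q, q <> 0 -> (q * - p)^2 + (q * e)^2 <> 0).
{ intros q hq; replace ((q * - p)^2 + (q * e)^2) with (q^2 * (p^2 + e^2)) by ring.
  apply Rmult_integral_contrapositive; split; [apply pow_nonzero |]; assumption. }
unfold expr7; rewrite denom_eq, Re_mul_one_add_div by
  (try apply hscale; apply Rgt_not_eq; try apply Rdiv_lt_0_compat; lra).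
fold p e; field; repeat split; try apply hscale; lra.
Qed.

Theorem lemma7 (m r gamma : R) (hm : 0 <= m) (hr : 0 < r) (hg : 0 < gamma)
  (hrm : r <= sqrt (2 / (gamma * m))) :
  forall tau d w : R, 0 <= tau -> tau < PI * m * r / 4 -> 0 <= d -> 0 < w ->
    denom m d r tau w <> (0, 0) /\ Re (expr7 m d r gamma tau w) > 0.
Proof.
intros tau d w ht htm hd hw; pose proof PI_gt_3_le_4.
assert (hm0 : 0 < m).
{ destruct hm as [hm | <-]; [exact hm | rewrite !Rmult_0_r, Rmult_0_l in htm; lra]. }
assert (hgmr : gamma*m*r^2 <= 2).
{ assert (hgm : 0 < gamma*m) by (apply Rmult_lt_0_compat; lra).
  assert (hr2 : r^2 <= 2/(gamma*m))
    by (apply pow2_le_of_le_sqrt; [lra | apply Rlt_le, Rdiv_lt_0_compat |]; lra).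
  apply (Rmult_le_compat_l (gamma*m)) in hr2; [field_simplify in hr2 |]; lra. }
set (k := m*w*r); set (t := w*tau).
assert (hk : 0 < k) by (unfold k; repeat apply Rmult_lt_0_compat; lra).
assert (ht0 : 0 <= t) by (unfold t; nra).
assert (hkt : 4*t < PI*k) by (unfold t, k; nra).
assert (hp : 0 < k - sin t) by (pose proof (sin_le_id t ht0); nra).
assert (hpe : 0 < (k - sin t)^2 + (r*d + cos t)^2).
{ pose proof (pow_lt _ 2 hp); pose proof (pow2_ge_0 (r*d + cos t)); lra. }
split.
- rewrite denom_eq by lra; intros [= h _].
  assert (0 < w/r) by (apply Rdiv_lt_0_compat; lra). fold k t in h; nra.
- rewrite Re_expr7_eq by (try apply Rgt_not_eq; assumption); fold k t.
  apply Rlt_gt, Rdiv_lt_0_compat; [| exact hpe].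
  apply re_numerator_pos; [lra | lra | lra | nra | |].
  + apply Rdiv_lt_0_compat; nra.
  + unfold k; field_simplify; lra.
Qed.
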